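(* Let $R\subseteq T$ be an integral extension of rings. Suppose that for every maximal ideal $Q$ of $T$ there is a maximal subring $V$ of $T$, integrally closed in $T$, with $(V:T)=Q$. Then for every maximal ideal $P$ of $R$ there is a maximal subring $W$ of $R$, integrally closed in $R$, with $(W:R)=P$.
   Context: All rings are commutative with $1\neq0$ and subrings are unital. A maximal subring of a ring $A$ is a proper subring maximal with respect to inclusion among proper subrings. The conductor of $S\subseteq A$ is $(S:A)=\{x\in A\mid Ax\subseteq S\}$. *)

From mathcomp Require Import all_boot all_algebra.
Set Implicit Arguments. Unset Strict Implicit. Unset Printing Implicit Defensive.
Import GRing.Theory.
Local Open Scope ring_scope.

(* Subsets of a commutative ring T are Prop-valued predicates T -> Prop.
   A subring R of a ring T is represented by its carrier inside T. *)

Definition subset_of (T : Type) (A B : T -> Prop) := forall x, A x -> B x.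
Definition same_set (T : Type) (A B : T -> Prop) := forall x, A x <-> B x.
Definition full_set (T : Type) : T -> Prop := fun _ => True.

Definition is_subring (T : comNzRingType) (S : T -> Prop) :=
  [/\ S 1, (forall x y, S x -> S y -> S (x - y)) & (forall x y, S x -> S y -> S (x * y))].

Definition is_ideal_of (T : comNzRingType) (A I : T -> Prop) :=
  [/\ subset_of I A, I 0, (forall x y, I x -> I y -> I (x + y))
    & (forall a x, A a -> I x -> I (a * x))].

Definition is_maximal_ideal_of (T : comNzRingType) (A I : T -> Prop) :=
  [/\ is_ideal_of A I, (exists a, A a /\ ~ I a)
    & forall J, is_ideal_of A J -> subset_of I J -> subset_of J I \/ subset_of A J].

Definition is_maximal_subring_of (T : comNzRingType) (A S : T -> Prop) :=
  [/\ is_subring S, subset_of S A, ~ subset_of A S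
    & forall S', is_subring S' -> subset_of S S' -> subset_of S' A ->
                 subset_of A S' \/ subset_of S' S].

Definition integral_over (T : comNzRingType) (S : T -> Prop) (x : T) :=
  exists p : {poly T}, [/\ p \is monic, (forall i, S p`_i) & root p x].

Definition int_closed_in (T : comNzRingType) (S A : T -> Prop) :=
  forall x, A x -> integral_over S x -> S x.

(* conductor (S : A) = { x in A | A x ⊆ S } *)
Definition conductor (T : comNzRingType) (S A : T -> Prop) : T -> Prop :=
  fun x => A x /\ forall a, A a -> S (a * x).

From mathcomp Require Import all_boot all_algebra.
From mathcomp Require Import boolp classical_sets.
From mathcomp Require Import ring.
Import GRing.Theory.
Set Implicit Arguments. Unset Strict Implicit. Unset Printing Implicit Defensive.
Local Open Scope classical_set_scope.
Local Open Scope ring_scope.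

(* Lying over provides a maximal ideal Q of T above P, and the hypothesis a maximal
   subring V of T, integrally closed in T, with (V : T) = Q; take W = V ∩ R.
   W is proper in R, since otherwise T, being integral over R ⊆ V, would equal V.
   If W ⊆ S ⊆ R and s ∈ S \ V, then s ∉ P, so s u ≡ 1 mod P for some u ∈ R.
   Maximality of V gives V[s] = T; clearing denominators with powers of u, which
   inverts s modulo the conductor, shows first that u is integral over V, hence in V,
   and then that r u^m ∈ W for each r ∈ R and some m, so r = (r u^m) s^m modulo P
   lies in S.  Finally (W : R) is an ideal of R containing P but not 1, hence P. *)

Section Subring.
Variables (T : comNzRingType) (S : T -> Prop).
Hypothesis subS : is_subring S.

Lemma subring1 : S 1. Proof. by case: subS. Qed.

Lemma subringB x y : S x -> S y -> S (x - y). Proof. by case: subS => _ + _; apply. Qed.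

Lemma subringM x y : S x -> S y -> S (x * y). Proof. by case: subS => _ _; apply. Qed.

Lemma subring0 : S 0. Proof. by rewrite -(subrr 1); apply: subringB; apply: subring1. Qed.

Lemma subringN x : S x -> S (- x). Proof. by rewrite -sub0r; apply/subringB/subring0. Qed.

Lemma subringD x y : S x -> S y -> S (x + y).
Proof. by move=> Sx Sy; rewrite -[y]opprK; apply/subringB/subringN. Qed.

Lemma subringX x n : S x -> S (x ^+ n).
Proof.
move=> Sx; elim: n => [|n IHn]; first by rewrite expr0; apply: subring1.
by rewrite exprS; apply: subringM.
Qed.

Lemma subring_sum n (F : 'I_n -> T) : (forall i, S (F i)) -> S (\sum_(i < n) F i).
Proof. by move=> SF; apply: big_ind => //; [apply: subring0 | apply: subringD]. Qed.

Lemma subring_nat (b : bool) : S b%:R.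
Proof. by case: b; [apply: subring1 | apply: subring0]. Qed.

Lemma subring_horner (p : {poly T}) x : (forall i, S p`_i) -> S x -> S p.[x].
Proof.
move=> Sp Sx; rewrite horner_coef; apply: subring_sum => i.
by apply: subringM => //; apply: subringX.
Qed.

Lemma integral_over_of_horner (g : {poly T}) u n :
  (forall i, S g`_i) -> (size g <= n)%N -> u ^+ n = g.[u] -> integral_over S u.
Proof.
move=> Sg szg ug; exists ('X^n - g); split.
- by apply/monicP; rewrite lead_coefDl ?lead_coefXn // size_polyN size_polyXn ltnS.
- by move=> i; rewrite coefB coefXn; apply: subringB => //; apply: subring_nat.
- by apply/rootP; rewrite hornerD hornerN hornerXn ug subrr.
Qed.

End Subring.

Lemma subring_full (T : comNzRingType) : is_subring (@full_set T).
Proof. by []. Qed.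

Lemma subringI (T : comNzRingType) (S1 S2 : T -> Prop) :
  is_subring S1 -> is_subring S2 -> is_subring (fun x => S1 x /\ S2 x).
Proof.
move=> sub1 sub2; split; first by split; apply: subring1.
- by move=> x y [? ?] [? ?]; split; apply: subringB.
- by move=> x y [? ?] [? ?]; split; apply: subringM.
Qed.

Lemma integral_overS (T : comNzRingType) (S1 S2 : T -> Prop) x :
  subset_of S1 S2 -> integral_over S1 x -> integral_over S2 x.
Proof. by move=> S12 [p [pmon S1p proot]]; exists p; split=> // i; apply: S12. Qed.

Section Ideal.
Variables (T : comNzRingType) (A I : T -> Prop).
Hypotheses (subA : is_subring A) (idI : is_ideal_of A I).

Lemma ideal_sub : subset_of I A. Proof. by case: idI. Qed.

Lemma ideal0 : I 0. Proof. by case: idI. Qed.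

Lemma idealD x y : I x -> I y -> I (x + y). Proof. by case: idI => _ _ + _; apply. Qed.

Lemma idealMl a x : A a -> I x -> I (a * x). Proof. by case: idI => _ _ _; apply. Qed.

Lemma idealN x : I x -> I (- x).
Proof. by rewrite -mulN1r; apply: idealMl; apply: subringN (subring1 subA). Qed.

Lemma idealB x y : I x -> I y -> I (x - y).
Proof. by move=> Ix Iy; apply: idealD => //; apply: idealN. Qed.

Lemma ideal_sum n (F : 'I_n -> T) : (forall i, I (F i)) -> I (\sum_(i < n) F i).
Proof. by move=> IF; apply: big_ind => //; [apply: ideal0 | apply: idealD]. Qed.

Lemma ideal_expr_sub1 z n : A z -> I (z - 1) -> I (z ^+ n - 1).
Proof.
move=> Az Iz1; elim: n => [|n IHn]; first by rewrite expr0 subrr; apply: ideal0.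
have -> : z ^+ n.+1 - 1 = z * (z ^+ n - 1) + (z - 1) by rewrite exprS; ring.
by apply: idealD => //; apply: idealMl.
Qed.

End Ideal.

Section MaximalIdeal.
Variables (T : comNzRingType) (A P : T -> Prop).
Hypotheses (subA : is_subring A) (maxP : is_maximal_ideal_of A P).

Let Pideal : is_ideal_of A P. Proof. by case: maxP. Qed.

Lemma maximal_ideal_not1 : ~ P 1.
Proof.
case: maxP => _ [a [Aa nPa]] _ P1; apply: nPa.
by rewrite -(mulr1 a); apply: (idealMl Pideal Aa P1).
Qed.

Lemma maximal_ideal_inverse a : A a -> ~ P a -> exists u, A u /\ P (u * a - 1).
Proof.
move=> Aa nPa; case: (maxP) => _ _ Pmax.
pose J x := exists q r, [/\ P q, A r & x = q + r * a].
have idJ : is_ideal_of A J.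
  split.
  - move=> _ [q [r [Pq Ar ->]]]; apply: subringD => //; first exact: (ideal_sub Pideal Pq).
    exact: subringM.
  - by exists 0, 0; split; [apply: (ideal0 Pideal) | apply: subring0 | rewrite mul0r addr0].
  - move=> _ _ [q [r [Pq Ar ->]]] [q' [r' [Pq' Ar' ->]]]; exists (q + q'), (r + r').
    by split; [exact: (idealD Pideal Pq Pq') | apply: subringD | ring].
  - move=> b _ Ab [q [r [Pq Ar ->]]]; exists (b * q), (b * r).
    by split; [exact: (idealMl Pideal Ab Pq) | apply: subringM | ring].
have PJ : subset_of P J.
  by move=> x Px; exists x, 0; split; [| apply: subring0 | rewrite mul0r addr0].
case: (Pmax J idJ PJ) => [JP | AJ].
  by case: nPa; apply: JP; exists 0, 1; split; [apply: (ideal0 Pideal) | apply: subring1 | ring].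
have [q [u [Pq Au E]]] := AJ 1 (subring1 subA).
exists u; split=> //; have -> : u * a - 1 = - q by rewrite E; ring.
exact: (idealN subA Pideal Pq).
Qed.

Lemma maximal_ideal_expr s n : A s -> ~ P s -> ~ P (s ^+ n).
Proof.
move=> As nPs Psn; have [u [Au Pus]] := maximal_ideal_inverse As nPs.
apply: maximal_ideal_not1.
have -> : 1 = u ^+ n * s ^+ n - ((u * s) ^+ n - 1) by rewrite exprMn; ring.
apply: idealB Pideal _ _ _ _ => //; first by apply: idealMl Pideal _ _ _ Psn; apply: subringX.
by apply: ideal_expr_sub1 Pideal _ _ _ Pus => //; apply: subringM.
Qed.

Lemma maximal_ideal_proper_sup J :
  is_ideal_of A J -> subset_of P J -> ~ J 1 -> same_set J P.
Proof.
move=> idJ PJ nJ1 x; split=> [Jx|]; last exact: PJ.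
case: maxP => _ _ /(_ J idJ PJ) [JP | AJ]; first exact: JP.
by case: nJ1; apply: AJ; apply: subring1.
Qed.

End MaximalIdeal.

Lemma conductor_ideal (T : comNzRingType) (S A : T -> Prop) :
  is_subring S -> is_subring A -> is_ideal_of A (conductor S A).
Proof.
move=> subS subA; split.
- by move=> x [].
- by split=> [|a _]; rewrite ?mulr0; [apply: subring0 | apply: subring0].
- move=> x y [Ax Sx] [Ay Sy]; split=> [|a Aa]; first exact: subringD.
  by rewrite mulrDr; apply: (subringD subS); [apply: Sx | apply: Sy].
- move=> b x Ab [Ax Sx]; split=> [|a Aa]; first exact: subringM.
  by rewrite mulrA; apply: Sx; apply: (subringM subA).
Qed.

Lemma conductor_sub (T : comNzRingType) (S A : T -> Prop) :
  is_subring A -> subset_of (conductor S A) S.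
Proof. by move=> subA x [_ Sx]; rewrite -(mul1r x); apply: Sx; apply: subring1. Qed.

Lemma ideal_sub_maximal (T : comNzRingType) (I : T -> Prop) :
  is_ideal_of (@full_set T) I -> ~ I 1 ->
  exists Q, is_maximal_ideal_of (@full_set T) Q /\ subset_of I Q.
Proof.
move=> idI nI1.
pose proper_sup J := [/\ is_ideal_of (@full_set T) J, subset_of I J & ~ J 1].
(* The empty set is admitted only so that the empty chain has an upper bound. *)
pose candidate J := J = set0 \/ proper_sup J.
have nonempty_candidate J x : candidate J -> J x -> proper_sup J.
  by case=> [-> // | //].
have [Q [candQ Qmax]] : exists Q, candidate Q /\ forall J, Q `<` J -> ~ candidate J.
  apply: Zorn_bigcup => F Fcand Ftot.
  have [[J0 [FJ0 [x0 J0x0]]] | Fempty] := pselect (exists J, F J /\ J !=set0); last first.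
    left; apply/seteqP; split=> // x [J FJ Jx].
    by apply: Fempty; exists J; split=> //; exists x.
  have [[_ J00 _ _] IJ0 _] := nonempty_candidate _ _ (Fcand _ FJ0) J0x0.
  right; split.
  - split=> //.
    + by exists J0.
    + move=> x y [J FJ Jx] [J' FJ' J'y].
      have [[_ _ JD _] _ _] := nonempty_candidate _ _ (Fcand _ FJ) Jx.
      have [[_ _ J'D _] _ _] := nonempty_candidate _ _ (Fcand _ FJ') J'y.
      case: (Ftot _ _ FJ FJ') => [JJ' | J'J].
      * by exists J' => //; apply: J'D => //; apply: JJ'.
      * by exists J => //; apply: JD => //; apply: J'J.
    + move=> a x _ [J FJ Jx]; exists J => //.
      by have [[_ _ _ JM] _ _] := nonempty_candidate _ _ (Fcand _ FJ) Jx; apply: JM.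
  - by move=> x Ix; exists J0 => //; apply: IJ0.
  - by move=> [J FJ J1]; have [_ _] := nonempty_candidate _ _ (Fcand _ FJ) J1.
have supI : proper_sup I by split.
have [Q0 | [idQ IQ nQ1]] := candQ.
  case: (Qmax I); last by right.
  by rewrite Q0; split=> [// | I_sub0]; apply: (I_sub0 0 (ideal0 idI)).
exists Q; split=> //; split=> //; first by exists 1.
move=> J idJ QJ; have [J1 | nJ1] := pselect (J 1).
  by right=> x _; rewrite -(mulr1 x); case: idJ => _ _ _; apply.
have [JQ | nJQ] := pselect (subset_of J Q); [by left | exfalso].
apply: (Qmax J); last by right; split=> // x Ix; apply/QJ/IQ.
by split=> // JQ; apply: nJQ => x Jx; apply: JQ.
Qed.

Definition extended_ideal (T : comNzRingType) (P : T -> Prop) : T -> Prop :=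
  fun x => exists k (p y : nat -> T), (forall j, P (p j)) /\ x = \sum_(j < k) p j * y j.

Lemma extended_ideal_ideal (T : comNzRingType) (P : T -> Prop) :
  P 0 -> is_ideal_of (@full_set T) (extended_ideal P).
Proof.
move=> P0; split=> //.
- by exists 0%N, (fun=> 0), (fun=> 0); split=> //; rewrite big_ord0.
- move=> _ _ [k [p [y [Pp ->]]]] [k' [p' [y' [Pp' ->]]]].
  pose glue (f f' : nat -> T) j := if (j < k)%N then f j else f' (j - k)%N.
  exists (k + k')%N, (glue p p'), (glue y y'); split=> [j|].
    by rewrite /glue; case: ifP.
  rewrite big_split_ord /glue; congr (_ + _); apply: eq_bigr => i _ /=.
    by rewrite ltn_ord.
  by rewrite ltnNge leq_addr addKn.
- move=> b _ _ [k [p [y [Pp ->]]]]; exists k, p, (fun j => b * y j); split=> //.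
  by rewrite mulr_sumr; apply: eq_bigr => j _; rewrite mulrCA.
Qed.

Lemma sub_extended_ideal (T : comNzRingType) (P : T -> Prop) :
  subset_of P (extended_ideal P).
Proof.
by move=> x Px; exists 1%N, (fun=> x), (fun=> 1); split=> //; rewrite big_ord1 mulr1.
Qed.

Section LyingOver.
Variables (T : comNzRingType) (R P : T -> Prop).
Hypotheses (subR : is_subring R) (intR : forall t, integral_over R t).
Hypothesis maxP : is_maximal_ideal_of R P.

(* Homogenizing a monic relation [f t = 0] of degree [n] gives a polynomial [F]
   with [F (a t) = a^n f t = 0] and [F s = s^n + a c]. *)
Lemma integral_homogenized_dvd a s t : R a -> R s ->
  exists n c w, R c /\ s ^+ n + a * c = (s - a * t) * w.
Proof.
move=> Ra Rs; have [f [fmon Rf froot]] := intR t.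
set n := (size f).-1.
have szf : size f = n.+1 by rewrite /n prednK // lt0n size_poly_eq0 monic_neq0.
have fn : f`_n = 1 by move/monicP: fmon; rewrite /lead_coef szf.
pose F := \poly_(i < n.+1) (f`_i * a ^+ (n - i)).
have F_at : root F (a * t).
  apply/rootP; transitivity (a ^+ n * f.[t]); last by rewrite (rootP froot) mulr0.
  rewrite horner_poly horner_coef szf mulr_sumr; apply: eq_bigr => i _.
  have -> : a ^+ n = a ^+ (n - i) * a ^+ i by rewrite -exprD subnK // leq_ord.
  by rewrite exprMn; ring.
have [q Fq] := factor_theorem _ _ F_at.
exists n, (\sum_(i < n) f`_i * a ^+ (n - i.+1) * s ^+ i), q.[s]; split.
  apply: (subring_sum subR) => i; apply: (subringM subR); last exact: subringX.
  by apply: (subringM subR) => //; apply: subringX.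
have : F.[s] = q.[s] * (s - a * t) by rewrite Fq hornerM hornerD hornerN hornerX hornerC.
rewrite mulrC => <-; rewrite horner_poly big_ord_recr /= fn subnn expr0 !mul1r addrC.
congr (_ + _); rewrite mulr_sumr; apply: eq_bigr => i _.
by rewrite -(subnSK (ltn_ord i)) exprS; ring.
Qed.

Lemma extended_ideal_contraction s : R s -> ~ P s -> ~ extended_ideal P s.
Proof.
(* Induction on the number of terms: if [s = z + p_k y_k], then [z] divides some
   [s^n + p_k c], which is again in [R] but not in [P]. *)
move=> Rs nPs [k [p [y [Pp]]]]; elim: k s y Rs nPs => [|k IHk] s y Rs nPs.
  by rewrite big_ord0 => s0; apply: nPs; rewrite s0; case: maxP => [[]].
rewrite big_ord_recr /=; set z := \sum_(i < k) _ => sE.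
have Pideal : is_ideal_of R P by case: maxP.
have Rpk := ideal_sub Pideal (Pp k).
have [n [c [w [Rc snE]]]] := integral_homogenized_dvd (y k) Rpk Rs.
have Rsn : R (s ^+ n + p k * c) by apply: (subringD subR); [apply: subringX | apply: subringM].
apply: (IHk _ (fun j => y j * w) Rsn).
  move=> Psn; apply: (maximal_ideal_expr subR maxP (n := n) Rs nPs).
  rewrite -(addrK (p k * c) (s ^+ n)); apply: (idealB subR Pideal Psn).
  by rewrite mulrC; apply: (idealMl Pideal Rc (Pp k)).
by rewrite snE sE addrK mulr_suml; apply: eq_bigr => j _; rewrite mulrA.
Qed.

Lemma lying_over_maximal :
  exists Q, is_maximal_ideal_of (@full_set T) Q /\ subset_of P Q.
Proof.
have P0 : P 0 by case: maxP => [[]].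
have [Q [maxQ PQ]] := ideal_sub_maximal (extended_ideal_ideal P0)
  (extended_ideal_contraction (subring1 subR) (maximal_ideal_not1 maxP)).
by exists Q; split=> // x Px; apply/PQ/sub_extended_ideal.
Qed.

End LyingOver.

(* [Poly (rev p)] is the reciprocal polynomial of [p]. *)
Lemma horner_rev_mul (T : comNzRingType) (p : {poly T}) u :
  u * (Poly (rev p)).[u] = \sum_(i < size p) p`_i * u ^+ (size p - i).
Proof.
rewrite (@horner_coef_wide _ (size p)); last by rewrite -(size_rev p) size_Poly.
rewrite mulr_sumr (reindex_inj rev_ord_inj) /=; apply: eq_bigr => i _.
rewrite coef_Poly nth_rev ?rev_ord_proof // subnSK // subKn 1?ltnW //.
by rewrite -(subnSK (ltn_ord i)) exprS; ring.
Qed.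

Lemma ideal_horner_rev (T : comNzRingType) (Q : T -> Prop) (p : {poly T}) x u :
  is_ideal_of (@full_set T) Q -> Q (x * u - 1) ->
  Q (p.[x] * u ^+ size p - u * (Poly (rev p)).[u]).
Proof.
move=> idQ Qxu; rewrite horner_rev_mul horner_coef mulr_suml -sumrB.
apply: (ideal_sum idQ) => i.
have -> : u ^+ size p = u ^+ i * u ^+ (size p - i) by rewrite -exprD subnKC // ltnW.
have -> : p`_i * x ^+ i * (u ^+ i * u ^+ (size p - i)) - p`_i * u ^+ (size p - i)
          = p`_i * u ^+ (size p - i) * ((x * u) ^+ i - 1) by rewrite exprMn; ring.
by apply: (idealMl idQ) => //; apply: (ideal_expr_sub1 idQ).
Qed.

Section MaximalSubring.
Variables (T : comNzRingType) (V : T -> Prop).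
Hypotheses (maxV : is_maximal_subring_of (@full_set T) V).

Let subV : is_subring V. Proof. by case: maxV. Qed.

Lemma maximal_subring_adjoin s : ~ V s ->
  forall t, exists p : {poly T}, (forall i, V p`_i) /\ t = p.[s].
Proof.
move=> nVs t; case: maxV => _ _ _ Vmax.
pose Vs y := exists p : {poly T}, (forall i, V p`_i) /\ y = p.[s].
have subVs : is_subring Vs.
  split.
  - by exists 1; split=> [i|]; rewrite ?coef1 ?hornerC //; apply: (subring_nat subV).
  - move=> _ _ [p [Vp ->]] [q [Vq ->]]; exists (p - q); split; last by rewrite hornerD hornerN.
    by move=> i; rewrite coefB; apply: (subringB subV).
  - move=> _ _ [p [Vp ->]] [q [Vq ->]]; exists (p * q); split; last by rewrite hornerM.
    by move=> i; rewrite coefM; apply: (subring_sum subV) => j; apply: (subringM subV).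
have VVs : subset_of V Vs.
  move=> v Vv; exists v%:P; split=> [i|]; last by rewrite hornerC.
  by rewrite coefC; case: eqP => _ //; apply: (subring0 subV).
case: (Vmax Vs subVs VVs) => // [fullVs | VsV]; first exact: fullVs.
by case: nVs; apply: VsV; exists 'X; split=> [i|]; rewrite ?hornerX // coefX; apply: subring_nat.
Qed.

Hypothesis intclV : int_closed_in V (@full_set T).

Let idC : is_ideal_of (@full_set T) (conductor V (@full_set T)).
Proof. exact: conductor_ideal. Qed.

Let CV : subset_of (conductor V (@full_set T)) V.
Proof. exact: conductor_sub. Qed.

Lemma maximal_subring_conductor_inverse s u :
  ~ V s -> conductor V (@full_set T) (s * u - 1) -> V u.
Proof.
move=> nVs Csu; apply: intclV => //.
have [p [Vp upE]] := maximal_subring_adjoin nVs u.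
(* Multiplying [u = p.[s]] by [u ^+ size p] yields a monic relation for [u] over [V]. *)
have Cp := ideal_horner_rev p idC Csu; rewrite -upE in Cp.
pose q := u * u ^+ size p - u * (Poly (rev p)).[u].
apply: (integral_over_of_horner subV (g := q%:P + 'X * Poly (rev p)) (n := (size p).+1)).
- move=> i; rewrite coefD coefC coefXM coef_Poly.
  apply: (subringD subV); first by case: eqP => _; [apply: CV | apply: subring0].
  case: eqP => _; first exact: subring0.
  have [ltip|leip] := ltnP i.-1 (size p); first by rewrite nth_rev // Vp.
  by rewrite nth_default ?size_rev //; apply: subring0.
- rewrite (leq_trans (size_polyD _ _)) // geq_max size_polyC (leq_trans (leq_b1 _)) //=.
  rewrite (leq_trans (size_polyMleq _ _)) // size_polyX /=.
  by rewrite add0n ltnS -(size_rev p) size_Poly.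
- by rewrite hornerD hornerC hornerM hornerX /q exprS subrK.
Qed.

Lemma maximal_subring_conductor_scale s u r :
  ~ V s -> conductor V (@full_set T) (s * u - 1) -> exists m, V (r * u ^+ m).
Proof.
move=> nVs Csu; have Vu := maximal_subring_conductor_inverse nVs Csu.
have [p [Vp rpE]] := maximal_subring_adjoin nVs r.
have Cp := ideal_horner_rev p idC Csu; rewrite -rpE in Cp.
exists (size p); rewrite -(subrK (u * (Poly (rev p)).[u]) (r * u ^+ size p)).
apply: (subringD subV); first exact: CV.
apply: (subringM subV Vu); apply: (subring_horner subV) => // i.
rewrite coef_Poly; have [ltip|leip] := ltnP i (size p); first by rewrite nth_rev // Vp.
by rewrite nth_default ?size_rev //; apply: subring0.
Qed.

End MaximalSubring.

Section Contraction.
Variables (T : comNzRingType) (R V P : T -> Prop).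
Hypotheses (subR : is_subring R) (intR : forall t, integral_over R t).
Hypotheses (maxV : is_maximal_subring_of (@full_set T) V)
  (intclV : int_closed_in V (@full_set T)).
Hypotheses (maxP : is_maximal_ideal_of R P) (PC : subset_of P (conductor V (@full_set T))).

Local Notation W := (fun x => V x /\ R x).

Let subV : is_subring V. Proof. by case: maxV. Qed.

Let Pideal : is_ideal_of R P. Proof. by case: maxP. Qed.

Let PW : subset_of P W.
Proof.
by move=> x Px; split; [apply: (conductor_sub (subring_full T) (PC Px)) | apply: (ideal_sub Pideal)].
Qed.

Lemma contraction_proper : ~ subset_of R W.
Proof.
move=> RW; case: maxV => _ _ nVfull _; apply: nVfull => t _.
by apply: intclV => //; apply: integral_overS (intR t) => x /RW [].
Qed.

Lemma contraction_int_closed : int_closed_in W R.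
Proof.
by move=> x Rx Wx; split=> //; apply: intclV => //; apply: integral_overS Wx => y [].
Qed.

Lemma contraction_maximal : is_maximal_subring_of R W.
Proof.
split=> [||| S subS WS SR]; first exact: subringI; [by move=> x [] | exact: contraction_proper |].
have [SW | nSW] := pselect (subset_of S W); [by right | left].
have [s [Ss nVs]] : exists s, S s /\ ~ V s.
  apply: contrapT => noS; apply: nSW => x Sx; split; last exact: SR.
  by apply: contrapT => nVx; apply: noS; exists x.
have Rs := SR _ Ss.
have [u [Ru Pus]] := maximal_ideal_inverse subR maxP Rs (fun Ps => nVs (PW Ps).1).
have Csu : conductor V (@full_set T) (s * u - 1) by apply: PC; rewrite mulrC.
move=> r Rr; have [m Vrum] := maximal_subring_conductor_scale maxV intclV r nVs Csu.
(* [r u^m] lies in [W] and [(u s)^m - 1] in [P]. *)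
have -> : r = r * u ^+ m * s ^+ m - r * ((u * s) ^+ m - 1) by rewrite exprMn; ring.
apply: (subringB subS).
  apply: (subringM subS); last exact: subringX.
  by apply: WS; split=> //; apply: (subringM subR) => //; apply: subringX.
apply/WS/PW/(idealMl Pideal Rr)/(ideal_expr_sub1 Pideal) => //.
exact: (subringM subR).
Qed.

Lemma contraction_conductor : same_set (conductor W R) P.
Proof.
apply: (maximal_ideal_proper_sup subR maxP).
- exact: conductor_ideal (subringI subV subR) subR.
- by move=> x Px; split=> [|a Ra]; [apply: (ideal_sub Pideal) | apply: PW (idealMl Pideal Ra Px)].
- by move=> [_ C1]; apply: contraction_proper => a Ra; rewrite -(mulr1 a); apply: C1.
Qed.

End Contraction.

Theorem theorem3p8 (T : comNzRingType) (R : T -> Prop) :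
  is_subring R ->
  (forall t : T, integral_over R t) ->
  (forall Q : T -> Prop, is_maximal_ideal_of (@full_set T) Q ->
     exists V : T -> Prop,
       [/\ is_maximal_subring_of (@full_set T) V,
           int_closed_in V (@full_set T)
         & same_set (conductor V (@full_set T)) Q]) ->
  forall P : T -> Prop, is_maximal_ideal_of R P ->
    exists W : T -> Prop,
      [/\ is_maximal_subring_of R W, int_closed_in W R
        & same_set (conductor W R) P].
Proof.
move=> subR intR hyp P maxP.
have [Q [maxQ PQ]] := lying_over_maximal subR intR maxP.
have [V [maxV intclV CQ]] := hyp Q maxQ.
have PC : subset_of P (conductor V (@full_set T)) by move=> x /PQ /CQ.
exists (fun x => V x /\ R x); split.
- exact: contraction_maximal subR intR maxV intclV maxP PC.
- exact: contraction_int_closed intclV.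
- exact: contraction_conductor subR intR maxV intclV maxP PC.
Qed.
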